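(* Let $q=1-p=o\!\left(\frac{1}{n^{1.5}}\right)$. Then for all sufficiently large $n\in\mathbb{N}$ we have $u_3(n,p)=u_3'(n,p)=4$.
   Context: $G(n,p)$ is the Erdős–Rényi random graph on $n$ labelled vertices (vertex set $V$), each edge present independently with probability $p=p(n)$; $\mathbb{P}_{n,p}$ is the corresponding probability and $q=1-p$. A diameter graph in $\mathbb{R}^d$ is a graph $(V,E)$ with $V\subset\mathbb{R}^d$ finite and $E=\{\{\mathbf{x},\mathbf{y}\}\subseteq V: |\mathbf{x}-\mathbf{y}|=\operatorname{diam}V\}$, where $\operatorname{diam}V=\max_{\mathbf{x},\mathbf{y}\in V}|\mathbf{x}-\mathbf{y}|$ (Euclidean norm); a graph is a diameter graph in $\mathbb{R}^d$ if it is isomorphic to one. $u_d(n,p)$ is the largest positive integer $k$ such that $\mathbb{P}_{n,p}\big(\exists W\subseteq V,\ |W|=k,\ G[W]$ is a diameter graph in $\mathbb{R}^d$ and $\chi(G[W])=d+1\big)>\frac12$, where $G[W]$ is the induced subgraph; if no such $k$ exists, $u_d(n,p)=0$. $u_d'(n,p)$ is defined identically with the additional requirement that $G[W]$ be connected. *)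

From Stdlib Require Import Reals ClassicalEpsilon.
From mathcomp Require Import all_boot.
Set Implicit Arguments. Unset Strict Implicit. Unset Printing Implicit Defensive.

Definition eucl_dist (d : nat) (a b : 'I_d -> R) : R :=
  sqrt (\big[Rplus/R0]_(i < d) Rsqr (Rminus (a i) (b i))).

(* A graph on the labelled vertex set 'I_n is encoded by its edge set
   E, a set of pairs (i,j) with i < j (one pair per unordered edge). *)
Definition upairs (n : nat) : {set 'I_n * 'I_n} := [set x : 'I_n * 'I_n | (nat_of_ord x.1 < nat_of_ord x.2)%N].

Definition adj (n : nat) (E : {set 'I_n * 'I_n}) : rel 'I_n :=
  fun x y => ((x, y) \in E) || ((y, x) \in E).

(* P_{n,p}(A) for the Erdos-Renyi random graph G(n,p): sum over all
   graphs (edge sets E within upairs n) of p^|E| q^(N-|E|) [A E]. *)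
Definition prob_np (n : nat) (p : R) (A : {set 'I_n * 'I_n} -> Prop) : R :=
  \big[Rplus/R0]_(E : {set 'I_n * 'I_n} | E \subset upairs n)
     Rmult (Rmult (pow p #|E|) (pow (Rminus 1 p) (#|upairs n| - #|E|)))
           (if excluded_middle_informative (A E) then R1 else R0).

(* The induced subgraph G[W] (adjacency relation e restricted to W)
   is a diameter graph in R^d: it is isomorphic to the diameter graph
   on the point set f(W), i.e. f is injective on W and for distinct
   x,y in W, xy is an edge iff |f x - f y| = diam f(W). *)
Definition is_diameter_graph (d n : nat) (e : rel 'I_n) (W : {set 'I_n}) : Prop :=
  exists f : 'I_n -> ('I_d -> R),
    {in W &, injective f} /\
    exists D : R,
      (forall x y, x \in W -> y \in W -> Rle (eucl_dist (f x) (f y)) D) /\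
      (exists x y, x \in W /\ y \in W /\ eucl_dist (f x) (f y) = D) /\
      (forall x y, x \in W -> y \in W -> x <> y ->
         (e x y <-> eucl_dist (f x) (f y) = D)).

Definition colorable (n : nat) (e : rel 'I_n) (W : {set 'I_n}) (k : nat) : Prop :=
  exists c : 'I_n -> nat,
    (forall x, x \in W -> (c x < k)%N) /\
    (forall x y, x \in W -> y \in W -> e x y -> c x <> c y).

Definition chromatic_number_is (n : nat) (e : rel 'I_n) (W : {set 'I_n}) (k : nat) : Prop :=
  colorable e W k /\ (forall j, colorable e W j -> (k <= j)%N).

Definition induced_connected (n : nat) (e : rel 'I_n) (W : {set 'I_n}) : Prop :=
  forall x y, x \in W -> y \in W ->
    connect (fun a b => [&& a \in W, b \in W & e a b]) x y.

Definition ud_event (conn : bool) (d n k : nat) (E : {set 'I_n * 'I_n}) : Prop :=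
  exists W : {set 'I_n},
    #|W| = k /\ is_diameter_graph d (adj E) W /\
    chromatic_number_is (adj E) W d.+1 /\
    (conn -> induced_connected (adj E) W).

Definition good_k (conn : bool) (d n : nat) (p : R) (k : nat) : bool :=
  (0 < k)%N && (if Rlt_dec (Rinv 2) (@prob_np n p (@ud_event conn d n k)) then true else false).

(* Largest positive k with P > 1/2, or 0 if none. Since the event is
   impossible for k > n (probability 0), it suffices to range over k <= n. *)
Definition u_gen (conn : bool) (d n : nat) (p : R) : nat :=
  \max_(k < n.+1 | good_k conn d n p k) (k : nat).

Definition u_d (d n : nat) (p : R) : nat := u_gen false d n p.
Definition u'_d (d n : nat) (p : R) : nat := u_gen true d n p.

(* If q = 1 - p = o(n^(-3/2)), then with probability tending to 1 the first four vertices
   span a K4; a regular tetrahedron realises it as a connected diameter graph in R^3 with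
   chromatic number 4, so u_3 and u_3' are at least 4.

   Conversely, the expected number of vertices with two non-neighbours is at most n^3 q^2,
   which tends to 0, so with probability tending to 1 the non-edges form a matching. In such
   a graph an induced subgraph on at least 5 vertices with chromatic number 4 contains a
   4-clique and hence a triangular bipyramid: two vertices both adjacent to the three vertices
   of a triangle. This is never a diameter graph in R^3, since the two points at distance D
   from the vertices of an equilateral triangle of side D are sqrt(8/3) D > D apart. *)

From Stdlib Require Import Reals ClassicalEpsilon.
From mathcomp Require Import all_boot all_order all_algebra.
From mathcomp Require Import Rstruct zify.
From Stdlib Require Import Lra Psatz FunctionalExtensionality.
Set Implicit Arguments. Unset Strict Implicit. Unset Printing Implicit Defensive.
Import Order.TTheory GRing.Theory Num.Theory.
Open Scope R_scope.

Definition i0 : 'I_3 := @Ordinal 3 0 isT.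
Definition i1 : 'I_3 := @Ordinal 3 1 isT.
Definition i2 : 'I_3 := @Ordinal 3 2 isT.

Lemma ord3P (i : 'I_3) : i = i0 \/ i = i1 \/ i = i2.
Proof.
case: i => [[|[|[|k]]] Hk] //; [left | right; left | right; right]; exact: val_inj.
Qed.

Definition dot3 (u v : 'I_3 -> R) : R := u i0 * v i0 + u i1 * v i1 + u i2 * v i2.
Definition vsub (u v : 'I_3 -> R) : 'I_3 -> R := fun i => u i - v i.
Definition sqdist (x y : 'I_3 -> R) : R := dot3 (vsub x y) (vsub x y).

Lemma big_ord3 (g : 'I_3 -> R) : \big[Rplus/R0]_(i < 3) g i = g i0 + g i1 + g i2.
Proof.
rewrite !big_ord_recl big_ord0 Rplus_0_r -Rplus_assoc.
by congr (g _ + g _ + g _); apply: val_inj.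
Qed.

Lemma eucl_dist3E (x y : 'I_3 -> R) : eucl_dist x y = sqrt (sqdist x y).
Proof. by rewrite /eucl_dist big_ord3. Qed.

Lemma sqdistC (x y : 'I_3 -> R) : sqdist x y = sqdist y x.
Proof. rewrite /sqdist /dot3 /vsub; ring. Qed.

Lemma sqdistxx (x : 'I_3 -> R) : sqdist x x = 0.
Proof. rewrite /sqdist /dot3 /vsub; ring. Qed.

Lemma sqdist_ge0 (x y : 'I_3 -> R) : 0 <= sqdist x y.
Proof. by rewrite /sqdist /dot3; repeat apply: Rplus_le_le_0_compat; apply: Rle_0_sqr. Qed.

Lemma sqdist_eq0 (x y : 'I_3 -> R) : sqdist x y = 0 -> x = y.
Proof.
rewrite /sqdist /dot3 /vsub /= => h.
have s0 := Rle_0_sqr (x i0 - y i0); have s1 := Rle_0_sqr (x i1 - y i1).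
have s2 := Rle_0_sqr (x i2 - y i2); rewrite /Rsqr in s0 s1 s2.
have /Rsqr_0_uniq/Rminus_diag_uniq e0 : Rsqr (x i0 - y i0) = 0 by rewrite /Rsqr; lra.
have /Rsqr_0_uniq/Rminus_diag_uniq e1 : Rsqr (x i1 - y i1) = 0 by rewrite /Rsqr; lra.
have /Rsqr_0_uniq/Rminus_diag_uniq e2 : Rsqr (x i2 - y i2) = 0 by rewrite /Rsqr; lra.
by apply: functional_extensionality => i; case: (ord3P i) => [->|[->|->]].
Qed.

Lemma dot3_vsub (c x y : 'I_3 -> R) :
  dot3 (vsub x c) (vsub y c) = (sqdist x c + sqdist y c - sqdist x y) / 2.
Proof. rewrite /sqdist /dot3 /vsub; field. Qed.

Definition det3 a b c d e f g h i := a * (e * i - f * h) - b * (d * i - f * g) + c * (d * h - e * g).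

Definition det4 m11 m12 m13 m14 m21 m22 m23 m24 m31 m32 m33 m34 m41 m42 m43 m44 :=
  m11 * det3 m22 m23 m24 m32 m33 m34 m42 m43 m44 - m12 * det3 m21 m23 m24 m31 m33 m34 m41 m43 m44
  + m13 * det3 m21 m22 m24 m31 m32 m34 m41 m42 m44 - m14 * det3 m21 m22 m23 m31 m32 m33 m41 m42 m43.

Definition gram4 (u1 u2 u3 u4 : 'I_3 -> R) : R :=
  det4 (dot3 u1 u1) (dot3 u1 u2) (dot3 u1 u3) (dot3 u1 u4)
       (dot3 u2 u1) (dot3 u2 u2) (dot3 u2 u3) (dot3 u2 u4)
       (dot3 u3 u1) (dot3 u3 u2) (dot3 u3 u3) (dot3 u3 u4)
       (dot3 u4 u1) (dot3 u4 u2) (dot3 u4 u3) (dot3 u4 u4).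

Lemma gram4_eq0 (u1 u2 u3 u4 : 'I_3 -> R) : gram4 u1 u2 u3 u4 = 0.
Proof. rewrite /gram4 /det4 /det3 /dot3; ring. Qed.

(* The Gram determinant of d - c, e - c, a - c, b - c vanishes in R^3; once the nine
   distances fix the inner products it equals s^2 t (8 s - 3 t) / 16 with t = |a - b|^2. *)
Lemma apices_sqdist (a b c d e : 'I_3 -> R) (s : R) :
  sqdist c d = s -> sqdist c e = s -> sqdist d e = s ->
  sqdist a c = s -> sqdist a d = s -> sqdist a e = s ->
  sqdist b c = s -> sqdist b d = s -> sqdist b e = s ->
  s ^ 2 * (sqdist a b * (8 * s - 3 * sqdist a b)) = 0.
Proof.
move=> cd ce de ac ad ae bc bd be.
have := gram4_eq0 (vsub d c) (vsub e c) (vsub a c) (vsub b c).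
rewrite /gram4 !dot3_vsub !sqdistxx (sqdistC d c) (sqdistC e c) (sqdistC e d) (sqdistC d a).
rewrite (sqdistC d b) (sqdistC e a) (sqdistC e b) (sqdistC b a) cd ce de ac ad ae bc bd be.
rewrite /det4 /det3; nra.
Qed.

Definition clique (T : finType) (r : rel T) (W : {set T}) : Prop :=
  {in W &, forall x y, x != y -> r x y}.

Definition bipyramid n (r : rel 'I_n) (W : {set 'I_n}) : Prop :=
  exists x y u v w : 'I_n,
    [/\ x \in W, y \in W, u \in W, v \in W & w \in W] /\ x != y /\
    [/\ r u v, r u w & r v w] /\ [/\ r x u, r x v & r x w] /\ [/\ r y u, r y v & r y w].

Lemma diameter_graph3_no_bipyramid n (r : rel 'I_n) (W : {set 'I_n}) :
  irreflexive r -> is_diameter_graph 3 r W -> ~ bipyramid r W.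
Proof.
move=> r_irr [f [f_inj [D [leD [_ edgeD]]]]].
move=> [x [y [u [v [w [[xW yW uW vW wW] [nxy [[ruv ruw rvw] [[rxu rxv rxw] [ryu ryv ryw]]]]]]]]]].
have edge_sq a b : a \in W -> b \in W -> r a b -> sqdist (f a) (f b) = D ^ 2.
  move=> aW bW rab; have nab : a <> b by move=> eab; rewrite eab r_irr in rab.
  by rewrite -(proj1 (edgeD a b aW bW nab) rab) eucl_dist3E pow2_sqrt //; apply: sqdist_ge0.
have le_xy : sqdist (f x) (f y) <= D ^ 2.
  rewrite -(pow2_sqrt (sqdist _ _)); last exact: sqdist_ge0.
  by apply: pow_incr; split; [apply: sqrt_pos | rewrite -eucl_dist3E; apply: leD].
have D2_pos : 0 < D ^ 2.
  rewrite -(edge_sq u v) //; case: (sqdist_ge0 (f u) (f v)) => // /esym/sqdist_eq0/(f_inj _ _ uW vW) euv.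
  by rewrite euv r_irr in ruv.
have := apices_sqdist (edge_sq _ _ uW vW ruv) (edge_sq _ _ uW wW ruw) (edge_sq _ _ vW wW rvw)
  (edge_sq _ _ xW uW rxu) (edge_sq _ _ xW vW rxv) (edge_sq _ _ xW wW rxw)
  (edge_sq _ _ yW uW ryu) (edge_sq _ _ yW vW ryv) (edge_sq _ _ yW wW ryw).
set t := sqdist (f x) (f y) in le_xy * => h.
have [/sqdist_eq0/(f_inj _ _ xW yW) exy | ] : t = 0 \/ 8 * D ^ 2 - 3 * t = 0.
  apply: Rmult_integral; apply: (Rmult_eq_reg_l ((D ^ 2) ^ 2)); first by rewrite Rmult_0_r.
  by apply: pow_nonzero; lra.
  by rewrite exy eqxx in nxy.
lra.
Qed.

Definition nonedges_matching (T : eqType) (r : rel T) : Prop :=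
  forall x y z, x != y -> x != z -> y != z -> r x y || r x z.

Section MatchingComplement.
Variables (n : nat) (r : rel 'I_n) (W : {set 'I_n}).
Hypotheses (r_sym : symmetric r) (r_irr : irreflexive r) (r_match : nonedges_matching r).

Lemma matching_other_edge b a c : a != b -> c != b -> a != c -> ~~ r b a -> r b c.
Proof.
move=> nab ncb nac nba; have := r_match (x:=b) (y:=a) (z:=c).
by rewrite (negbTE nba); apply; rewrite // eq_sym.
Qed.

Lemma bipyramid_of_clique (b : 'I_n) (K : {set 'I_n}) :
  b \in W -> K \subset W -> b \notin K -> clique r K -> (4 <= #|K|)%N -> bipyramid r W.
Proof.
move=> bW sKW bK cK hK.
have nbK y : y \in K -> y != b by move=> yK; apply: contraNneq bK => <-.
have [a aK adj_b] : exists2 a, a \in K & {in K :\ a, forall y, r b y}.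
  case: (pickP [pred y in K | ~~ r b y]) => [a /andP[aK nba] | none].
    exists a => // y /setD1P[ya yK].
    by apply: (matching_other_edge (nbK a aK) (nbK y yK) _ nba); rewrite eq_sym.
  have /card_gt0P[a aK] : (0 < #|K|)%N by apply: leq_trans hK.
  by exists a => // y /setD1P[_ yK]; have := none y; rewrite /= yK => /negbFE.
have : (2 < #|K :\ a|)%N by move: hK; rewrite (cardsD1 a K) aK add1n ltnS.
case/card_gt2P=> [u [v [w [[/setD1P[ua uK] /setD1P[va vK] /setD1P[wa wK]] [uv vw wu]]]]].
exists a, b, u, v, w; split; first by split => //; apply: (subsetP sKW).
split; first exact: nbK.
split; first by split; apply: cK; rewrite // eq_sym.
split; first by split; apply: cK; rewrite // eq_sym.
by split; apply: adj_b; rewrite !inE ?ua ?va ?wa.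
Qed.

(* The non-edges of G[W] form a matching; [low_clique] keeps the smaller endpoint of each of
   them and every unmatched vertex. Colouring x by its representative [low_rep x] is proper,
   so |low_clique| bounds the chromatic number from above. *)
Definition low_clique : {set 'I_n} := [set x in W | [forall y in W, (y < x)%N ==> r x y]].

Lemma low_clique_sub : low_clique \subset W.
Proof. by apply/subsetP => x; rewrite inE => /andP[]. Qed.

Lemma low_clique_clique : clique r low_clique.
Proof.
have low x y : x \in low_clique -> y \in W -> (y < x)%N -> r x y.
  by rewrite inE => /andP[_ /forall_inP H] yW; apply/implyP/H.
move=> x y xQ yQ nxy; have yW := subsetP low_clique_sub y yQ.
have xW := subsetP low_clique_sub x xQ.
case: (ltngtP x y) => [xy|yx|/val_inj exy]; last by rewrite exy eqxx in nxy.
- by rewrite r_sym; apply: low.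
- exact: low.
Qed.

Lemma low_clique_nonneighbour a b : a \in W -> b \in W -> (a < b)%N -> ~~ r b a -> a \in low_clique.
Proof.
move=> aW bW ab nba; rewrite inE aW; apply/forall_inP => y yW; apply/implyP => ya.
apply: (@matching_other_edge a b); last by rewrite r_sym.
all: by rewrite neq_ltn ?ab ?ya ?(ltn_trans ya ab) ?orbT.
Qed.

Definition low_rep (x : 'I_n) : 'I_n :=
  if [pick y in W | (y < x)%N && ~~ r x y] is Some y then y else x.

Lemma low_repP x : x \in W ->
  low_rep x \in low_clique /\ (low_rep x = x \/ (low_rep x < x)%N /\ ~~ r x (low_rep x)).
Proof.
move=> xW; rewrite /low_rep; case: pickP => [y /andP[yW /andP[yx nxy]] | none].
  by split; [exact: low_clique_nonneighbour nxy | right].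
split; last by left.
rewrite inE xW; apply/forall_inP => y yW; apply/implyP => yx.
by have := none y; rewrite /= yW yx => /negbFE.
Qed.

Lemma colorable_low_clique : colorable r W #|low_clique|.
Proof.
exists (fun x => index (low_rep x) (enum low_clique)); split.
  by move=> x xW; rewrite cardE index_mem mem_enum; case: (low_repP xW).
move=> x y xW yW rxy same.
have [xQ hx] := low_repP xW; have [yQ hy] := low_repP yW.
have exy : low_rep x = low_rep y.
  by apply: (@index_inj _ x (enum low_clique) _ _ _ _ same); rewrite mem_enum.
have nxy : x != y by apply: contraTneq rxy => ->; rewrite r_irr.
case: hx => [ex|[ltx nx]]; case: hy => [ey|[lty ny]].
- by rewrite -ex exy ey eqxx in nxy.
- by rewrite -exy ex r_sym rxy in ny.
- by rewrite exy ey rxy in nx.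
- have : r (low_rep x) x || r (low_rep x) y.
    by apply: r_match; [rewrite neq_ltn ltx | rewrite exy neq_ltn lty |].
  by rewrite r_sym (negbTE nx) /= exy r_sym (negbTE ny).
Qed.

Lemma bipyramid_of_chromatic_ge4 : (5 <= #|W|)%N ->
  (forall k, colorable r W k -> (4 <= k)%N) -> bipyramid r W.
Proof.
move=> hW chi; have hQ := chi _ colorable_low_clique.
have [b bW hb] : exists2 b, b \in W & (4 <= #|low_clique :\ b|)%N.
  case: (boolP (W \subset low_clique)) => [sWQ | /subsetPn[b bW bQ]].
    have /card_gt0P[b bW] : (0 < #|W|)%N by apply: leq_trans hW.
    exists b => //; move: (leq_trans hW (subset_leq_card sWQ)).
    by rewrite (cardsD1 b) (subsetP sWQ b bW).
  by exists b; rewrite // (setDidPl _) // disjoint_sym disjoints1.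
apply: (bipyramid_of_clique bW _ _ _ hb).
- exact: subset_trans (subsetDl _ _) low_clique_sub.
- by rewrite setD11.
- by move=> x y /setD1P[_ xQ] /setD1P[_ yQ]; apply: low_clique_clique.
Qed.

End MatchingComplement.

Lemma adj_sym n (E : {set 'I_n * 'I_n}) : symmetric (adj E).
Proof. by move=> x y; rewrite /adj orbC. Qed.

Lemma adj_irr n (E : {set 'I_n * 'I_n}) : E \subset upairs n -> irreflexive (adj E).
Proof. by move=> sEU x; rewrite /adj orbb; apply/negP => /(subsetP sEU); rewrite inE ltnn. Qed.

Lemma ud_event3_not_matching conn n k (E : {set 'I_n * 'I_n}) : (5 <= k)%N ->
  E \subset upairs n -> @ud_event conn 3 n k E -> ~ nonedges_matching (adj E).
Proof.
move=> hk sEU [W [cardW [diamW [[_ chi] _]]]] hM.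
apply: (diameter_graph3_no_bipyramid (adj_irr sEU) diamW).
by apply: (bipyramid_of_chromatic_ge4 (adj_sym E) (adj_irr sEU) hM _ chi); rewrite cardW.
Qed.

Lemma clique_connected n (r : rel 'I_n) (W : {set 'I_n}) : clique r W -> induced_connected r W.
Proof.
move=> cW x y xW yW; case: (eqVneq x y) => [->|nxy]; first exact: connect0.
by apply: connect1; rewrite /= xW yW cW.
Qed.

(* Vertices of a regular tetrahedron of edge 2 sqrt 2 inscribed in the cube [-1,1]^3. *)
Definition tetra (k : nat) (i : 'I_3) : R :=
  if k is k'.+1 then (if (i == k' :> nat) then 1 else -1) else 1.

Lemma tetra_sqdist k l : (k < 4)%N -> (l < 4)%N -> k <> l -> sqdist (tetra k) (tetra l) = 8.
Proof.
by case: k => [|[|[|[|k]]]] //; case: l => [|[|[|[|l]]]] // _ _ _; rewrite /sqdist /dot3 /vsub /=; ring.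
Qed.

Section FirstFour.
Variables (n : nat) (n4 : (4 <= n)%N).

Definition first4 : {set 'I_n} := widen_ord n4 @: [set: 'I_4].

Lemma mem_first4 (x : 'I_n) : (x \in first4) = (x < 4)%N.
Proof.
apply/imsetP/idP => [[i _ ->] | x4] /=; first exact: ltn_ord.
by exists (Ordinal x4); [rewrite in_setT | apply: val_inj].
Qed.

Lemma card_first4 : #|first4| = 4%N.
Proof. by rewrite card_imset ?cardsT ?card_ord // => i j /(congr1 val) /= /val_inj. Qed.

Lemma first4_diameter_graph (r : rel 'I_n) : clique r first4 -> is_diameter_graph 3 r first4.
Proof.
move=> cW; have sq8 x y : x \in first4 -> y \in first4 -> x != y -> sqdist (tetra x) (tetra y) = 8.
  by rewrite !mem_first4 => x4 y4 nxy; apply: tetra_sqdist => // /val_inj exy; rewrite exy eqxx in nxy.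
have x0W : widen_ord n4 ord0 \in first4 by rewrite mem_first4.
have x1W : widen_ord n4 (@Ordinal 4 1 isT) \in first4 by rewrite mem_first4.
exists (fun x => tetra x); split.
  move=> x y xW yW exy; apply/eqP; apply: contraT => nxy.
  by have := sq8 x y xW yW nxy; rewrite /= exy sqdistxx; lra.
exists (sqrt 8); split.
  move=> x y xW yW; rewrite eucl_dist3E; case: (eqVneq x y) => [->|nxy].
    by rewrite sqdistxx sqrt_0; apply: sqrt_pos.
  by rewrite sq8 //; apply: Rle_refl.
split; first by exists (widen_ord n4 ord0), (widen_ord n4 (@Ordinal 4 1 isT)); rewrite eucl_dist3E sq8.
move=> x y xW yW /eqP nxy; rewrite eucl_dist3E sq8 //.
by split=> // _; apply: cW.
Qed.

Lemma first4_chromatic (r : rel 'I_n) : irreflexive r -> clique r first4 ->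
  chromatic_number_is r first4 4.
Proof.
move=> r_irr cW; split.
  exists (fun x => nat_of_ord x); split=> [x|x y _ _ rxy exy]; first by rewrite mem_first4.
  by rewrite (val_inj exy) r_irr in rxy.
move=> j [c [c_lt c_proper]].
have vW (k : 'I_4) : widen_ord n4 k \in first4 by rewrite mem_first4 /= ltn_ord.
pose col (k : 'I_4) : 'I_j := Ordinal (c_lt _ (vW k)).
have col_inj : injective col.
  move=> k l /(congr1 val) /= ckl; apply/eqP/negPn/negP => nkl.
  by apply: (c_proper _ _ (vW k) (vW l) _ ckl); apply: cW.
by have := leq_card col col_inj; rewrite !card_ord.
Qed.

Definition K4_edges : {set 'I_n * 'I_n} := [set e : 'I_n * 'I_n | (e.1 < e.2 < 4)%N].

Lemma K4_edges_sub : K4_edges \subset upairs n.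
Proof. by apply/subsetP => e; rewrite !inE => /andP[]. Qed.

Lemma card_K4_edges : (#|K4_edges| <= 16)%N.
Proof.
rewrite -[16%N]/(4 * 4)%N -card_first4 -cardsX; apply: subset_leq_card.
apply/subsetP => -[x y]; rewrite !inE /= !mem_first4 => /andP[xy y4].
by rewrite y4 (ltn_trans xy y4).
Qed.

Lemma ud_event_K4 conn (E : {set 'I_n * 'I_n}) : E \subset upairs n -> K4_edges \subset E ->
  @ud_event conn 3 n 4 E.
Proof.
move=> sEU sKE; have cW : clique (adj E) first4.
  move=> x y; rewrite !mem_first4 => x4 y4 nxy; rewrite /adj.
  case: (ltngtP x y) => [xy|yx|/val_inj exy]; last by rewrite exy eqxx in nxy.
  - by rewrite (subsetP sKE) // inE /= xy y4.
  - by rewrite orbC (subsetP sKE) // inE /= yx x4.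
exists first4; split; first exact: card_first4.
split; first exact: first4_diameter_graph.
split; first exact: first4_chromatic (adj_irr sEU) cW.
by move=> _; apply: clique_connected.
Qed.

End FirstFour.

Section SubsetWeights.
Local Open Scope ring_scope.
Variables (T : finType) (R : comNzRingType).

Lemma sum_subset_weight_prod (U : {set T}) (p q : R) (a b : T -> R) :
  \sum_(J : {set T} | J \subset U) p ^+ #|J| * q ^+ (#|U| - #|J|) *
      \prod_i (if i \in J then a i else b i)
  = \prod_i (if i \in U then p * a i + q * b i else b i).
Proof.
have weightE (J : {set T}) : J \subset U ->
    p ^+ #|J| * q ^+ (#|U| - #|J|) = \prod_i (if i \in J then p else if i \in U then q else 1).
  move=> sJU; rewrite (bigID (mem J)) /= (eq_bigr (fun _ => p)) => [|i ->] //.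
  rewrite prodr_const (eq_bigr (fun i => if i \in U then q else 1)) => [|i /negbTE ->] //.
  rewrite -big_mkcondr /= (eq_bigl (mem (U :\: J))) => [|i]; last by rewrite !inE andbC.
  by rewrite prodr_const cardsD (setIidPr sJU).
pose F i := if i \in U then p * a i else 0.
pose G i := if i \in U then q * b i else b i.
transitivity (\prod_i (F i + G i)); last first.
  by apply: eq_bigr => i _; rewrite /F /G; case: (i \in U); rewrite ?add0r.
rewrite bigA_distr [RHS](bigID (fun J : {set T} => J \subset U)) /=.
rewrite [X in _ = _ + X]big1 ?addr0 => [|J /subsetPn[i iJ iU]]; last first.
  by rewrite (bigD1 i) //= iJ /F (negbTE iU) mul0r.
apply: eq_bigr => J sJU; rewrite weightE // -big_split /=.
apply: eq_bigr => i _; rewrite /F /G; case: ifP => iJ; first by rewrite (subsetP sJU _ iJ).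
by case: (i \in U); rewrite ?mul1r.
Qed.

Lemma sum_weight_superset (U S : {set T}) (p : R) : S \subset U ->
  \sum_(J : {set T} | J \subset U) p ^+ #|J| * (1 - p) ^+ (#|U| - #|J|) * (S \subset J)%:R
  = p ^+ #|S|.
Proof.
move=> sSU; have indE (J : {set T}) : (S \subset J)%:R = \prod_i (if i \in J then 1 else (i \notin S)%:R) :> R.
  case: (boolP (S \subset J)) => [sSJ | /subsetPn[i iS iJ]].
    by rewrite big1 // => i _; case: ifP => // /negbT iJ; rewrite (contra (subsetP sSJ i)).
  by rewrite (bigD1 i) //= (negbTE iJ) iS mul0r.
under eq_bigr => J _ do rewrite indE.
rewrite sum_subset_weight_prod -prodr_const [RHS]big_mkcond /=; apply: eq_bigr => i _.
case: (boolP (i \in S)) => iS; first by rewrite (subsetP sSU _ iS) mulr1 mulr0 addr0.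
by case: (i \in U); rewrite // mulr1 mulr1 addrC subrK.
Qed.

Lemma sum_weight_disjoint (U S : {set T}) (p : R) : S \subset U ->
  \sum_(J : {set T} | J \subset U) p ^+ #|J| * (1 - p) ^+ (#|U| - #|J|) * [disjoint S & J]%:R
  = (1 - p) ^+ #|S|.
Proof.
move=> sSU; have indE (J : {set T}) : [disjoint S & J]%:R = \prod_i (if i \in J then (i \notin S)%:R else 1) :> R.
  case: (boolP [disjoint S & J]) => [dSJ | ].
    by rewrite big1 // => i _; case: ifP => // iJ; rewrite (disjointFl dSJ iJ).
  by rewrite disjoints_subset => /subsetPn[i iS]; rewrite inE negbK => iJ; rewrite (bigD1 i) //= iJ iS mul0r.
under eq_bigr => J _ do rewrite indE.
rewrite sum_subset_weight_prod -prodr_const [RHS]big_mkcond /=; apply: eq_bigr => i _.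
case: (boolP (i \in S)) => iS; first by rewrite (subsetP sSU _ iS) mulr0 add0r mulr1.
by case: (i \in U); rewrite // !mulr1 addrC subrK.
Qed.

End SubsetWeights.

Section ErdosRenyi.
Local Open Scope ring_scope.
Variables (n : nat) (p : R).
Hypotheses (p_ge0 : 0 <= p) (p_le1 : p <= 1).

Lemma prob_npE (A : {set 'I_n * 'I_n} -> Prop) : prob_np p A =
  \sum_(E : {set 'I_n * 'I_n} | E \subset upairs n) p ^+ #|E| * (1 - p) ^+ (#|upairs n| - #|E|) *
     (if excluded_middle_informative (A E) then 1 else 0).
Proof. by apply: eq_bigr => E _; rewrite !RpowE. Qed.

Lemma weight_ge0 (E : {set 'I_n * 'I_n}) : 0 <= p ^+ #|E| * (1 - p) ^+ (#|upairs n| - #|E|).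
Proof. by rewrite mulr_ge0 ?exprn_ge0 ?subr_ge0. Qed.

Lemma prob_np_ge_superset (S : {set 'I_n * 'I_n}) (A : {set 'I_n * 'I_n} -> Prop) :
  S \subset upairs n -> (forall E : {set 'I_n * 'I_n}, E \subset upairs n -> S \subset E -> A E) ->
  p ^+ #|S| <= prob_np p A.
Proof.
move=> sSU hA; rewrite prob_npE -(sum_weight_superset p sSU).
apply: ler_sum => E sEU; rewrite ler_wpM2l ?weight_ge0 //.
case: (boolP (S \subset E)) => [sSE | _].
  by case: (excluded_middle_informative (A E)) => [AE | nAE] /=; [exact: lexx | case: nAE; apply: hA].
by case: (excluded_middle_informative (A E)) => ? /=; rewrite ?lexx ?ler01.
Qed.

Lemma prob_np_le_union (I : finType) (P : pred I) (T : I -> {set 'I_n * 'I_n})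
    (A : {set 'I_n * 'I_n} -> Prop) :
  (forall i, P i -> T i \subset upairs n) ->
  (forall E : {set 'I_n * 'I_n}, E \subset upairs n -> A E -> exists2 i, P i & [disjoint T i & E]) ->
  prob_np p A <= \sum_(i | P i) (1 - p) ^+ #|T i|.
Proof.
move=> sTU hA; rewrite prob_npE.
under [X in _ <= X]eq_bigr => i Pi do rewrite -(sum_weight_disjoint p (sTU i Pi)).
rewrite exchange_big /=; apply: ler_sum => E sEU; rewrite -big_distrr /= ler_wpM2l ?weight_ge0 //.
case: (excluded_middle_informative (A E)) => [AE | ?] /=; last by rewrite sumr_ge0.
have [i Pi dTE] := hA E sEU AE.
by rewrite (bigD1 i) //= dTE lerDl sumr_ge0.
Qed.

End ErdosRenyi.

Definition upair n (x y : 'I_n) : 'I_n * 'I_n := if (x < y)%N then (x, y) else (y, x).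

Lemma upair_upairs n (x y : 'I_n) : x != y -> upair x y \in upairs n.
Proof. by rewrite /upair inE; case: (ltngtP x y) => //= /val_inj ->; rewrite eqxx. Qed.

Lemma adj_upair n (E : {set 'I_n * 'I_n}) (x y : 'I_n) : upair x y \in E -> adj E x y.
Proof. by rewrite /upair /adj; case: ifP => _ ->; rewrite ?orbT. Qed.

Definition distinct3 n (t : 'I_n * 'I_n * 'I_n) : bool :=
  [&& t.1.1 != t.1.2, t.1.1 != t.2 & t.1.2 != t.2].

(* Both pairs are non-edges exactly when [t.1.1] has the two non-neighbours [t.1.2] and [t.2]. *)
Definition cherry n (t : 'I_n * 'I_n * 'I_n) : {set 'I_n * 'I_n} :=
  [set upair t.1.1 t.1.2; upair t.1.1 t.2].

Lemma card_cherry n (t : 'I_n * 'I_n * 'I_n) : distinct3 t -> #|cherry t| = 2%N.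
Proof.
case: t => [[x y] z] /and3P[/= nxy nxz nyz]; rewrite cards2 /upair.
by do 2 case: ifP => _; rewrite xpair_eqE ?(negbTE nyz) ?(negbTE nxz) 1?eq_sym ?(negbTE nxy) ?andbF.
Qed.

Lemma bernoulli_pow (x : R) k : 0 <= x -> 1 - INR k * (1 - x) <= x ^ k.
Proof.
move=> x0; elim: k => [|k IH]; first by rewrite /=; lra.
rewrite S_INR [x ^ k.+1]/=; have := Rmult_le_compat_l x _ _ x0 IH.
have := Rmult_le_pos _ _ (pos_INR k) (Rle_0_sqr (1 - x)); rewrite /Rsqr; nra.
Qed.

Lemma prob_K4_ge conn n (p : R) : (4 <= n)%N -> 0 <= p -> p <= 1 ->
  1 - 16 * (1 - p) <= prob_np p (@ud_event conn 3 n 4).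
Proof.
move=> n4 p0 p1; apply: (Rle_trans _ (p ^ #|K4_edges n|)).
  apply: Rle_trans (bernoulli_pow _ p0).
  have /le_INR : (#|K4_edges n| <= 16)%coq_nat by apply/ssrnat.leP; apply: card_K4_edges.
  rewrite [INR 16]/=; nra.
move/RleP: p0 => p0; move/RleP: p1 => p1; rewrite RpowE; apply/RleP.
by apply: (prob_np_ge_superset p0 p1 (K4_edges_sub n)) => E sEU sKE; apply: ud_event_K4.
Qed.

Lemma prob_large_le conn n k (p : R) : (5 <= k)%N -> 0 <= p -> p <= 1 ->
  prob_np p (@ud_event conn 3 n k) <= INR n ^ 3 * (1 - p) ^ 2.
Proof.
move=> hk /RleP p0 /RleP p1; rewrite INRE !RpowE; apply/RleP.
apply: le_trans (prob_np_le_union p0 p1 (P := @distinct3 n) (T := @cherry n) _ _) _.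
- move=> [[x y] z] /and3P[/= nxy nxz _]; apply/subsetP => e.
  by rewrite in_set2 => /orP[] /eqP ->; apply: upair_upairs.
- move=> E sEU hev; apply: NNPP => none; apply: (ud_event3_not_matching hk sEU hev).
  move=> x y z nxy nxz nyz; apply/negPn/negP => /norP[nexy nexz]; apply: none.
  exists (x, y, z); first by rewrite /distinct3 /= nxy nxz nyz.
  rewrite disjoints_subset; apply/subsetP => e; rewrite !inE.
  by case/orP => /eqP ->; apply/negP => /adj_upair; apply/negP.
rewrite (eq_bigr (fun _ => (1 - p) ^+ 2)%R) => [|t /card_cherry -> //].
apply: le_trans (_ : \sum_(t : 'I_n * 'I_n * 'I_n) (1 - p) ^+ 2 <= _)%R.
  by rewrite [X in (_ <= X)%R](bigID (@distinct3 n)) /= lerDl sumr_ge0 // => t _; rewrite sqr_ge0.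
rewrite sumr_const !card_prod !card_ord -[(_ *+ _)%R]mulr_natr mulrC !natrM.
by rewrite [(n%:R ^+ 3)%R]exprSr [(n%:R ^+ 2)%R]expr2.
Qed.

Lemma u_gen_eq conn d n (p : R) m : (0 < m <= n)%N ->
  / 2 < prob_np p (@ud_event conn d n m) ->
  (forall k, (m < k)%N -> prob_np p (@ud_event conn d n k) <= / 2) ->
  u_gen conn d n p = m.
Proof.
move=> /andP[m0 mn] good_m bad_gt; apply/eqP; rewrite eqn_leq; apply/andP; split.
  apply/bigmax_leqP => k; rewrite leqNgt; apply: contraTN => /bad_gt le_half.
  by rewrite /good_k; destruct Rlt_dec; [exfalso; lra | rewrite andbF].
have mn1 : (m < n.+1)%N by rewrite ltnS.
apply: (@leq_bigmax_cond _ _ _ (Ordinal mn1)).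
by rewrite /good_k m0; destruct Rlt_dec.
Qed.

Lemma Rpower_three_halves_bounds (x q : R) : 1 <= x -> 0 <= q -> q * Rpower x (3 / 2) < / 32 ->
  16 * q < / 2 /\ x ^ 3 * q ^ 2 < / 2.
Proof.
move=> x1 q0 small; have x0 : 0 < x by lra.
have ge1 : 1 <= Rpower x (3 / 2) by rewrite -(Rpower_O x x0); apply: Rle_Rpower; lra.
have ge0 : 0 < Rpower x (3 / 2) by lra.
have sq : Rpower x (3 / 2) ^ 2 = x ^ 3.
  by rewrite -!Rpower_pow // Rpower_mult; congr Rpower; rewrite /=; field.
have : 0 <= q * Rpower x (3 / 2) by nra.
rewrite -sq; split; nra.
Qed.

Theorem theorem20 (p : nat -> R)
  (hp : forall n, Rle 0 (p n) /\ Rle (p n) 1)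
  (hq : Un_cv (fun n => Rmult (Rminus 1 (p n)) (Rpower (INR n) (Rdiv 3 2))) 0) :
  exists N : nat, forall n : nat, (N <= n)%N ->
    u_d 3 n (p n) = 4%N /\ u'_d 3 n (p n) = 4%N.
Proof.
have [N hN] := hq (/ 32) ltac:(lra).
exists (maxn N 4) => n hn; have [p0 p1] := hp n.
have n4 : (4 <= n)%N := leq_trans (leq_maxr N 4) hn.
have [q16 qn3] : 16 * (1 - p n) < / 2 /\ INR n ^ 3 * (1 - p n) ^ 2 < / 2.
  apply: Rpower_three_halves_bounds.
  - by apply: (le_INR 1); apply/ssrnat.leP; apply: leq_trans n4.
  - lra.
  - apply: Rle_lt_trans (Rle_abs _) _; rewrite -[X in Rabs X]Rminus_0_r.
    by apply: hN; apply/ssrnat.leP; apply: leq_trans hn; apply: leq_maxl.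
suff u4 conn : u_gen conn 3 n (p n) = 4%N by split; apply: u4.
apply: u_gen_eq => [| | k hk]; first by rewrite n4.
- by have := prob_K4_ge conn n4 p0 p1; lra.
- by have := prob_large_le conn n hk p0 p1; lra.
Qed.
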